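(* Let $X$ be as in the standing setting with skeleton $X_1,\dots,X_k$. Let $x,y\in X$ lie in no $\operatorname{span}X_l$, and suppose $x\in\operatorname{pos}\{x_i,x_j\}$ and $y\in\operatorname{pos}\{y_i,y_j\}$ for some $i\neq j$, $x_i,y_i\in X_i$, $x_j,y_j\in X_j$. If $|X_i|>2$, then $x_i=y_i$.
   Context: Standing setting: $X\subset\mathbb R^n\setminus\{0\}$ is a finite set such that $0$ lies in the interior of $\operatorname{conv}X$, no element of $X$ is a positive multiple of another, and every $n+1$ points of $X$ are in good position. A finite set $A$ is in conical position if $0\notin\operatorname{conv}A$ and no point of $A$ lies in the positive hull (set of nonnegative linear combinations, denoted $\operatorname{pos}$) of the other points; it is in good position otherwise. A skeleton of $X$ is a collection of pairwise disjoint subsets $X_1,\dots,X_k\subseteq X$ such that each $X_i$ is the vertex set of a simplex whose relative interior contains $0$ and $\mathbb R^n=\operatorname{span}X_1\oplus\cdots\oplus\operatorname{span}X_k$. *)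

From HB Require Import structures.
From mathcomp Require Import all_boot all_order all_algebra.
From mathcomp Require Import finmap.
From mathcomp Require Import reals.
Set Implicit Arguments.
Unset Strict Implicit.
Unset Printing Implicit Defensive.
Import Order.TTheory GRing.Theory Num.Theory.
Local Open Scope ring_scope.
Local Open Scope fset_scope.

Section Convex.
Variables (R : realType) (n : nat).
Notation V := 'rV[R]_n.

Definition in_conv (A : {fset V}) (v : V) : Prop :=
  exists l : V -> R, (forall a, a \in A -> 0 <= l a) /\
    \sum_(a <- A) l a = 1 /\ \sum_(a <- A) l a *: a = v.

(* positive hull (nonnegative linear combinations); pos of the empty set is {0} *)
Definition in_pos (A : {fset V}) (v : V) : Prop :=
  exists l : V -> R, (forall a, a \in A -> 0 <= l a) /\
    \sum_(a <- A) l a *: a = v.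

Definition in_aff (A : {fset V}) (v : V) : Prop :=
  exists l : V -> R, \sum_(a <- A) l a = 1 /\ \sum_(a <- A) l a *: a = v.

(* interior (for the standard topology of R^n, via sup-norm balls) *)
Definition in_interior (S : V -> Prop) (p : V) : Prop :=
  exists2 e : R, 0 < e & forall v : V, (forall i, `|v 0 i - p 0 i| < e) -> S v.

Definition in_relint_conv (A : {fset V}) (p : V) : Prop :=
  in_conv A p /\
  exists2 e : R, 0 < e & forall v : V, in_aff A v ->
    (forall i, `|v 0 i - p 0 i| < e) -> in_conv A v.

Definition conical_position (A : {fset V}) : Prop :=
  ~ in_conv A 0 /\ forall a, a \in A -> ~ in_pos (A `\ a) a.

Definition good_position (A : {fset V}) : Prop := ~ conical_position A.

(* A is the vertex set of a simplex: A is affinely independent *)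
Definition affinely_independent (A : {fset V}) : Prop :=
  forall l : V -> R, \sum_(a <- A) l a = 0 -> \sum_(a <- A) l a *: a = 0 ->
    forall a, a \in A -> l a = 0.

Definition standing_setting (X : {fset V}) : Prop :=
  [/\ 0 \notin X,
      in_interior (in_conv X) 0,
      (forall x y, x \in X -> y \in X -> x != y ->
          ~ exists2 c : R, 0 < c & y = c *: x) &
      (forall A : {fset V}, A `<=` X -> #|` A| = n.+1 -> good_position A)].

Definition skeleton (X : {fset V}) (k : nat) (Xs : 'I_k -> {fset V}) : Prop :=
  [/\ (forall l, Xs l `<=` X),
      (forall l m, l != m -> Xs l `&` Xs m = fset0),
      (forall l, affinely_independent (Xs l) /\ in_relint_conv (Xs l) 0),
      (\sum_(l < k) <<Xs l>>)%VS = fullv &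
      directv (\sum_(l < k) <<Xs l>>)%VS].

End Convex.

From HB Require Import structures.
From mathcomp Require Import all_boot all_order all_algebra.
From mathcomp Require Import finmap.
From mathcomp Require Import reals.
From mathcomp Require Import lra.
Set Implicit Arguments.
Unset Strict Implicit.
Unset Printing Implicit Defensive.
Import Order.TTheory GRing.Theory Num.Theory.
Local Open Scope ring_scope.
Local Open Scope fset_scope.

(* Proof of Proposition 5.3.  Suppose x_i <> y_i, and pick a third vertex r of
   X_i.  We build a set A of at least n+1 points of X in which every subset is in
   conical position, contradicting the standing setting.  A consists of x, y and
   all skeleton vertices except r, one further vertex p_l of each X_l (l <> i, j),
   and x_j together with one more vertex q of X_j (q = y_j when y_j <> x_j).
   - Each skeleton simplex X_l carries positive weights lam_l with
     sum lam_l a *: a = 0, and every linear relation among the vertices of X_l is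
     a multiple of lam_l (simplex_weightsP); so a relation vanishing at one vertex
     vanishes identically.
   - Since the spans of the X_l form a direct sum, a linear relation on A splits
     into one relation per component.  Comparing coefficients at the removed
     vertices shows that a relation on A with at most one negative coefficient is
     trivial (relation_trivial); hence every subset of A is in conical position.
   - Counting: |A| = sum_l |X_l| - k + 1 >= sum_l dim <<X_l>> + 1 >= n + 1. *)

Section Simplex.
Variables (R : realType) (n : nat).
Notation V := 'rV[R]_n.
Local Open Scope ring_scope.

Lemma sum_pick (T : choiceType) (M : zmodType) (A : {fset T}) (a0 : T) (F : T -> M) :
  a0 \in A -> \sum_(a <- A) (if a == a0 then F a else 0) = F a0.
Proof.
move=> a0A; rewrite (big_fsetD1 a0) //= eqxx big1_seq ?addr0 //.
by move=> a /andP[_]; rewrite in_fsetD1 => /andP[/negbTE -> _].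
Qed.

Lemma sum_restrict (A B : {fset V}) (mu : V -> R) : B `<=` A ->
  \sum_(a <- B) mu a *: a = \sum_(a <- A) (if a \in B then mu a else 0) *: a.
Proof.
move=> sBA.
rewrite (eq_big_seq (fun a => (if a \in B then mu a else 0) *: a)); last by move=> a ->.
by rewrite (big_fset_incl _ sBA) // => a _ /negbTE ->; rewrite scale0r.
Qed.

Definition pick2 (u v : V) (cu cv : R) (a : V) : R :=
  (if a == u then cu else 0) + (if a == v then cv else 0).

Lemma sum_pick2 (A : {fset V}) (u v : V) (cu cv : R) : u \in A -> v \in A ->
  \sum_(a <- A) pick2 u v cu cv a *: a = cu *: u + cv *: v.
Proof.
move=> uA vA; under eq_bigr do rewrite scalerDl.
rewrite big_split /=; congr (_ + _).
- rewrite -(sum_pick (fun a : V => cu *: a) uA).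
  by apply: eq_bigr => a _; case: eqP; rewrite ?scale0r.
- rewrite -(sum_pick (fun a : V => cv *: a) vA).
  by apply: eq_bigr => a _; case: eqP; rewrite ?scale0r.
Qed.

Definition simplex_weights (A : {fset V}) (lam : V -> R) : Prop :=
  [/\ forall a, a \in A -> 0 < lam a,
      \sum_(a <- A) lam a = 1,
      \sum_(a <- A) lam a *: a = 0 &
      forall nu : V -> R, \sum_(a <- A) nu a *: a = 0 ->
        forall a, a \in A -> nu a = (\sum_(b <- A) nu b) * lam a].

Lemma affine_coords_unique (A : {fset V}) (l1 l2 : V -> R) :
  affinely_independent A ->
  \sum_(a <- A) l1 a = \sum_(a <- A) l2 a ->
  \sum_(a <- A) l1 a *: a = \sum_(a <- A) l2 a *: a ->
  forall a, a \in A -> l1 a = l2 a.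
Proof.
move=> affA s1 s2 a aA; apply/eqP; rewrite -subr_eq0; apply/eqP.
apply: (affA (fun b => l1 b - l2 b)) => //; first by rewrite sumrB s1 subrr.
by under eq_bigr do rewrite scalerBl; rewrite sumrB s2 subrr.
Qed.

Lemma affine_relation_multiple (A : {fset V}) (lam nu : V -> R) :
  affinely_independent A -> \sum_(a <- A) lam a = 1 -> \sum_(a <- A) lam a *: a = 0 ->
  \sum_(a <- A) nu a *: a = 0 ->
  forall a, a \in A -> nu a = (\sum_(b <- A) nu b) * lam a.
Proof.
move=> affA lam1 lam0 nu0; apply: affine_coords_unique => //.
  by rewrite -mulr_sumr lam1 mulr1.
symmetry; under eq_bigr do rewrite -scalerA.
by rewrite -scaler_sumr lam0 scaler0 nu0.
Qed.

(* If 0 is in the relative interior of the simplex A, its barycentric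
   coordinates are positive: otherwise pushing 0 slightly away from a vertex with
   coordinate <= 0 would stay in conv A with a negative coordinate. *)
Lemma relint_weights_pos (A : {fset V}) (lam : V -> R) :
  affinely_independent A -> in_relint_conv A 0 ->
  \sum_(a <- A) lam a = 1 -> \sum_(a <- A) lam a *: a = 0 ->
  forall a, a \in A -> 0 < lam a.
Proof.
move=> affA [_ [e e_gt0 near_conv]] lam1 lam0 a aA; rewrite ltNge; apply/negP => lam_a.
pose M := \sum_(c < n) `|a 0 c|.
have M_ge0 : 0 <= M by apply: sumr_ge0.
pose d := e / (M + 1).
have d_gt0 : 0 < d by rewrite divr_gt0 //; lra.
have dM : d * (M + 1) = e by rewrite /d mulfVK // gt_eqF //; lra.
pose nu b := (1 + d) * lam b - (if b == a then d else 0).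
have nu1 : \sum_(b <- A) nu b = 1.
  by rewrite sumrB -mulr_sumr lam1 (@sum_pick _ _ A a (fun _ => d) aA); lra.
have nu0 : \sum_(b <- A) nu b *: b = - d *: a.
  under eq_bigr do rewrite scalerBl -scalerA.
  rewrite sumrB -scaler_sumr lam0 scaler0 sub0r scaleNr; congr (- _).
  rewrite -(sum_pick (fun b : V => d *: b) aA).
  by apply: eq_bigr => b _; case: eqP; rewrite ?scale0r.
have [kap [kap_ge0 [kap1 kap0]]] : in_conv A (- d *: a).
  apply: near_conv; first by exists nu.
  move=> c; rewrite !mxE subr0 normrM normrN (gtr0_norm d_gt0).
  have : `|a 0 c| <= M by rewrite /M (bigD1 c) //= lerDl sumr_ge0.
  have := normr_ge0 (a 0 c); nra.
have := affine_coords_unique affA (etrans kap1 (esym nu1)) (etrans kap0 (esym nu0)) aA.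
by rewrite /nu eqxx; have := kap_ge0 a aA; nra.
Qed.

Lemma simplex_weightsP (A : {fset V}) :
  affinely_independent A -> in_relint_conv A 0 -> exists lam, simplex_weights A lam.
Proof.
move=> affA relA; have [[lam [_ [lam1 lam0]]] _] := relA.
exists lam; split => //; first exact: relint_weights_pos.
by move=> nu; apply: affine_relation_multiple.
Qed.

Section Weights.
Variables (A : {fset V}) (lam : V -> R).
Hypothesis lamA : simplex_weights A lam.

Lemma simplex_nonempty : exists a, a \in A.
Proof.
have [_ lam1 _ _] := lamA; case: (fset_0Vmem A) => [A0|[a aA]]; last by exists a.
by move: lam1; rewrite A0 big_seq_fset0 => /eqP; rewrite eq_sym oner_eq0.
Qed.

Lemma relation_vanishes (nu : V -> R) (d : V) :
  \sum_(a <- A) nu a *: a = 0 -> d \in A -> nu d = 0 -> forall a, a \in A -> nu a = 0.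
Proof.
have [lam_gt0 _ _ rel] := lamA => nu0 dA nud a aA.
have := rel nu nu0 d dA; rewrite nud => /esym/eqP.
rewrite mulf_eq0 (gt_eqF (lam_gt0 d dA)) orbF => /eqP t0.
by rewrite rel // t0 mul0r.
Qed.

Lemma relation_same_sign (nu : V -> R) (a b : V) :
  \sum_(c <- A) nu c *: c = 0 -> a \in A -> b \in A ->
  (nu a < 0 -> nu b < 0) /\ (0 < nu a -> 0 < nu b).
Proof.
have [lam_gt0 _ _ rel] := lamA => nu0 aA bA.
move: (rel nu nu0 a aA) (rel nu nu0 b bA) (lam_gt0 a aA) (lam_gt0 b bA).
by set t := \sum_(c <- A) nu c => -> -> la lb; split => ?; nra.
Qed.

Lemma simplex_dim : (\dim <<A>>%VS < #|` A|)%N.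
Proof.
have [lam_gt0 _ lam0 _] := lamA; have [p pA] := simplex_nonempty.
have sub : (<<A>> <= <<A `\ p>>)%VS.
  apply/span_subvP => a aA; case: (eqVneq a p) => [->|ap]; last first.
    by apply: memv_span; rewrite in_fsetD1 ap aA.
  move: lam0; rewrite (big_fsetD1 p) //= => /eqP; rewrite addrC addr_eq0 => /eqP h.
  rewrite {1}(_ : p = - (lam p)^-1 *: \sum_(b <- A `\ p) lam b *: b); last first.
    by rewrite h scaleNr scalerN opprK scalerA mulVf ?scale1r // gt_eqF // lam_gt0.
  rewrite rpredZ // big_seq rpred_sum // => b bA.
  by rewrite rpredZ // memv_span.
apply: (leq_ltn_trans (dimvS sub)); apply: (leq_ltn_trans (dim_span _)).
by rewrite [X in (_ < X)%N](cardfsD1 p) pA.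
Qed.

Lemma exists_other_vertex (a : V) : a \in A -> 0 \notin A ->
  exists2 b, b \in A & b != a.
Proof.
have [lam_gt0 _ lam0 _] := lamA => aA A0.
case: (fset_0Vmem (A `\ a)) => [Aa|[b]]; last first.
  by rewrite in_fsetD1 => /andP[ba bA]; exists b.
move: lam0; rewrite (big_fsetD1 a) //= Aa big_seq_fset0 addr0 => /eqP.
rewrite scaler_eq0 (gt_eqF (lam_gt0 a aA)) /= => /eqP a0.
by move: A0; rewrite -a0 aA.
Qed.

End Weights.

Lemma pos_pair_positive (Sa Sb : {fset V}) (a b z : V) :
  a \in Sa -> b \in Sb -> z \notin <<Sa>>%VS -> z \notin <<Sb>>%VS ->
  in_pos [fset a; b] z ->
  exists al be : R, [/\ 0 < al, 0 < be & z = al *: a + be *: b].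
Proof.
move=> aS bS zSa zSb [l [l_ge0 lz]].
have spanZ c S : c \in S -> forall t : R, t *: c \in <<S>>%VS.
  by move=> cS t; rewrite rpredZ // memv_span.
case: (eqVneq a b) => [ab|ab].
  by move: lz zSa; rewrite ab fsetUid big_seq_fset1 => <-; rewrite -ab spanZ.
have zE : z = l a *: a + l b *: b.
  by rewrite -lz big_fsetU1 ?big_seq_fset1 // in_fset1.
have la_ge0 : 0 <= l a by rewrite l_ge0 // in_fset2 eqxx.
have lb_ge0 : 0 <= l b by rewrite l_ge0 // in_fset2 eqxx orbT.
exists (l a), (l b); split => //; rewrite lt_neqAle ?la_ge0 ?lb_ge0 andbT.
- by apply: contra zSb => /eqP la0; rewrite zE -la0 scale0r add0r spanZ.
- by apply: contra zSa => /eqP lb0; rewrite zE -lb0 scale0r addr0 spanZ.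
Qed.

End Simplex.

Lemma exists_third (T : choiceType) (S : {fset T}) (a b : T) :
  (2 < #|` S|)%N -> exists r, [/\ r \in S, r != a & r != b].
Proof.
move=> S_gt2; have : (0 < #|` S `\` [fset a; b]|)%N.
  rewrite cardfsD subn_gt0; apply: leq_ltn_trans S_gt2.
  apply: leq_trans (fsubset_leq_card (fsubsetIr S [fset a; b])) _.
  by rewrite cardfs2; case: (a != b).
rewrite cardfs_gt0 => /fset0Pn [r]; rewrite in_fsetD in_fset2 negb_or.
by case/andP => /andP[ra rb] rS; exists r.
Qed.

Lemma fsubset_of_card (T : choiceType) (S : {fset T}) (m : nat) :
  (m <= #|` S|)%N -> exists2 S' : {fset T}, S' `<=` S & #|` S'| = m.
Proof.
move=> hm; exists [fset a in take m (enum_fset S)].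
  by apply/fsubsetP => a; rewrite inE => /mem_take.
by rewrite card_fseq undup_id ?size_takel // take_uniq // fset_uniq.
Qed.

Section Skeleton.
Variables (R : realType) (n k : nat).
Notation V := 'rV[R]_n.
Local Open Scope ring_scope.
Variable Xs : 'I_k -> {fset V}.
Hypothesis Xs_disj : forall l m, l != m -> Xs l `&` Xs m = fset0.
Hypothesis Xs_direct : directv (\sum_(l < k) <<Xs l>>)%VS.

Lemma skeleton_component_uniq (l m : 'I_k) (a : V) : a \in Xs l -> a \in Xs m -> l = m.
Proof.
move=> al am; apply/eqP; apply: contraT => lm.
by move: (Xs_disj lm) => /fsetP/(_ a); rewrite in_fsetI al am in_fset0.
Qed.

Lemma skeleton_components (w : 'I_k -> V) :
  (forall l, w l \in <<Xs l>>%VS) -> \sum_(l < k) w l = 0 -> forall l, w l = 0.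
Proof.
move=> w_in w0 l.
exact: (elimT directv_sum_independent Xs_direct) w (fun m _ => w_in m) w0 l isT.
Qed.

(* Since the spans fill R^n and each simplex has one vertex more than the
   dimension of its span, the skeleton has at least n + k vertices. *)
Lemma skeleton_card :
  (\sum_(l < k) <<Xs l>>)%VS = fullv ->
  (forall l, exists lam, simplex_weights (Xs l) lam) ->
  (n + k <= \sum_(l < k) #|` Xs l|)%N.
Proof.
move=> full simp.
have dim_sum : (n <= \sum_(l < k) \dim <<Xs l>>)%N.
  apply: (@leq_trans (\dim (fullv : {vspace V}))); first by rewrite dimvf /dim /= mul1n.
  by rewrite -full; exact: dimv_sum_leqif.
have k_sum : (\sum_(l < k) 1 = k)%N by rewrite sum1_card card_ord.
apply: leq_trans (leq_add dim_sum (leqnn k)) _.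
rewrite -[X in (_ + X <= _)%N]k_sum -big_split /=; apply: leq_sum => l _.
by rewrite addn1; have [lam /simplex_dim] := simp l.
Qed.

End Skeleton.

Section ConicalSubset.
Variables (R : realType) (n k : nat).
Notation V := 'rV[R]_n.
Local Open Scope ring_scope.
Variables (X : {fset V}) (Xs : 'I_k -> {fset V}).
Hypothesis Xs_sub : forall l, Xs l `<=` X.
Hypothesis Xs_disj : forall l m, l != m -> Xs l `&` Xs m = fset0.
Hypothesis Xs_full : (\sum_(l < k) <<Xs l>>)%VS = fullv.
Hypothesis Xs_direct : directv (\sum_(l < k) <<Xs l>>)%VS.
Hypothesis Xs_simplex : forall l, exists lam, simplex_weights (Xs l) lam.

Variables (i j : 'I_k) (x y xi xj yi yj : V) (al be ga de : R).
Hypothesis i_neq_j : i != j.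
Hypotheses (al_gt0 : 0 < al) (be_gt0 : 0 < be) (ga_gt0 : 0 < ga) (de_gt0 : 0 < de).
Hypotheses (x_def : x = al *: xi + be *: xj) (y_def : y = ga *: yi + de *: yj).
Hypotheses (xi_in : xi \in Xs i) (yi_in : yi \in Xs i).
Hypotheses (xj_in : xj \in Xs j) (yj_in : yj \in Xs j).
Hypotheses (x_out : forall l, x \notin Xs l) (y_out : forall l, y \notin Xs l).
Hypotheses (x_in : x \in X) (y_in : y \in X).
Hypothesis xi_neq_yi : xi != yi.
Variable r : V.
Hypotheses (r_in : r \in Xs i) (r_neq_xi : r != xi) (r_neq_yi : r != yi).

(* If x = y, the X_i-components of the two expansions agree, giving a relation
   al xi - ga yi = 0 on X_i that vanishes at r, hence is trivial. *)
Lemma x_neq_y : x != y.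
Proof.
apply/eqP => x_eq_y.
pose w l := if l == i then al *: xi - ga *: yi
            else if l == j then be *: xj - de *: yj else 0.
have w_span l : w l \in <<Xs l>>%VS.
  rewrite /w; case: eqP => [->|_]; first by rewrite rpredB ?rpredZ ?memv_span.
  by case: eqP => [->|_]; rewrite ?rpred0 // rpredB ?rpredZ ?memv_span.
have w_sum : \sum_(l < k) w l = 0.
  rewrite (bigD1 i) //= (bigD1 j) 1?eq_sym //= big1 => [|l /andP[/negbTE li /negbTE lj]]; last by rewrite /w li lj.
  rewrite /w eqxx eq_sym (negbTE i_neq_j) eqxx addr0 addrACA -opprD -x_def -y_def.
  by rewrite x_eq_y subrr.
have rel : \sum_(a <- Xs i) pick2 xi yi al (- ga) a *: a = 0.
  by rewrite sum_pick2 // scaleNr; move: (skeleton_components Xs_direct w_span w_sum i); rewrite /w eqxx.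
have [lam lamXi] := Xs_simplex i.
have := relation_vanishes lamXi rel r_in _ xi_in.
rewrite /pick2 eqxx (negbTE xi_neq_yi) (negbTE r_neq_xi) (negbTE r_neq_yi) !addr0 => /(_ erefl).
by move/eqP; rewrite (gt_eqF al_gt0).
Qed.

Variables (q : V) (p : 'I_k -> V).
Hypotheses (q_in : q \in Xs j) (q_neq_xj : q != xj) (q_yj : xj != yj -> q = yj).
Hypothesis p_in : forall l, p l \in Xs l.

Definition removed (l : 'I_k) : {fset V} :=
  if l == i then [fset r] else if l == j then [fset xj; q] else [fset p l].
Definition kept (l : 'I_k) : {fset V} := Xs l `\` removed l.
Definition kept_union : {fset V} := [fset a in X | [exists l, a \in kept l]].
Definition cone_set : {fset V} := x |` (y |` kept_union).

Lemma mem_kept l a : (a \in kept l) = (a \notin removed l) && (a \in Xs l).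
Proof. by rewrite in_fsetD. Qed.

Lemma kept_sub l : kept l `<=` Xs l.
Proof. exact: fsubsetDl. Qed.

Lemma mem_kept_union a : (a \in kept_union) = [exists l, a \in kept l].
Proof.
rewrite !inE; case: existsP => [[l a_l]|] /=; rewrite ?andbT ?andbF //.
exact: (fsubsetP (Xs_sub l)) (fsubsetP (kept_sub l) a a_l).
Qed.

Lemma removed_sub l : removed l `<=` Xs l.
Proof.
rewrite /removed; case: eqP => [->|_]; first by rewrite fsub1set.
case: eqP => [->|_]; last by rewrite fsub1set.
by apply/fsubsetP => a; rewrite in_fset2 => /orP[] /eqP ->.
Qed.

Lemma card_removed l : #|` removed l| = (1 + (l == j))%N.
Proof.
rewrite /removed; case: (eqVneq l i) => [->|_]; first by rewrite cardfs1 (negbTE i_neq_j).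
by case: (eqVneq l j) => _; rewrite ?cardfs1 // cardfs2 eq_sym q_neq_xj.
Qed.

Lemma removed_vertex l : exists2 d, d \in Xs l & d \notin kept l.
Proof.
have [d] : exists d, d \in removed l.
  rewrite /removed; case: eqP => _; first by exists r; rewrite in_fset1.
  by case: eqP => _; [exists xj; rewrite in_fset2 eqxx | exists (p l); rewrite in_fset1].
by move=> dD; exists d; rewrite ?mem_kept ?dD // (fsubsetP (removed_sub l)).
Qed.

Lemma sum_kept_union (M : Type) (idx : M) (op : Monoid.com_law idx) (F : V -> M) :
  \big[op/idx]_(a <- kept_union) F a = \big[op/idx]_(l < k) \big[op/idx]_(a <- kept l) F a.
Proof.
rewrite (eq_big_seq (fun a => \big[op/idx]_(l < k) (if a \in kept l then F a else idx)));
  last first.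
  move=> a; rewrite mem_kept_union => /existsP [m a_m].
  rewrite (bigD1 m) //= a_m big1 ?Monoid.mulm1 // => l lm; case: ifP => // a_l.
  by move: lm; rewrite (skeleton_component_uniq Xs_disj (fsubsetP (kept_sub l) a a_l)
    (fsubsetP (kept_sub m) a a_m)) eqxx.
rewrite exchange_big; apply: eq_bigr => l _.
have sub : kept l `<=` kept_union.
  by apply/fsubsetP => a a_l; rewrite mem_kept_union; apply/existsP; exists l.
rewrite -(big_fset_incl _ sub); last by move=> a _ /negbTE ->.
by apply: eq_big_seq => a ->.
Qed.

Lemma x_notin_kept_union : x \notin kept_union.
Proof.
by rewrite mem_kept_union; apply/existsP => -[l]; rewrite mem_kept (negbTE (x_out l)) andbF.
Qed.

Lemma y_notin_kept_union : y \notin kept_union.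
Proof.
by rewrite mem_kept_union; apply/existsP => -[l]; rewrite mem_kept (negbTE (y_out l)) andbF.
Qed.

Lemma xi_kept : xi \in kept i.
Proof. by rewrite mem_kept /removed eqxx in_fset1 eq_sym r_neq_xi. Qed.

Lemma yi_kept : yi \in kept i.
Proof. by rewrite mem_kept /removed eqxx in_fset1 eq_sym r_neq_yi. Qed.

Lemma x_cone : x \in cone_set.
Proof. exact: fset1U1. Qed.

Lemma y_cone : y \in cone_set.
Proof. by rewrite !in_fset1U eqxx orbT. Qed.

Lemma kept_cone l a : a \in kept l -> a \in cone_set.
Proof.
move=> a_l; rewrite !in_fset1U mem_kept_union.
by apply/orP; right; apply/orP; right; apply/existsP; exists l.
Qed.

Lemma xj_not_kept : xj \notin kept j.
Proof. by rewrite mem_kept /removed eq_sym (negbTE i_neq_j) eqxx in_fset2 eqxx. Qed.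

Lemma x_neq_yi : x != yi.
Proof. by apply: contraNneq (x_out i) => ->. Qed.

Lemma y_neq_xi : y != xi.
Proof. by apply: contraNneq (y_out i) => ->. Qed.

Section Relation.
Variable mu : V -> R.
Hypothesis mu_rel : \sum_(b <- cone_set) mu b *: b = 0.

(* The coefficient of the vertex a of X_l once x and y are expanded. *)
Definition coef (l : 'I_k) (a : V) : R :=
  (if a \in kept l then mu a else 0)
  + (if l == i then pick2 xi yi (mu x * al) (mu y * ga) a else 0)
  + (if l == j then pick2 xj yj (mu x * be) (mu y * de) a else 0).

Lemma coef_expansion l :
  \sum_(a <- Xs l) coef l a *: a = \sum_(b <- kept l) mu b *: b
    + (if l == i then (mu x * al) *: xi + (mu y * ga) *: yi else 0)
    + (if l == j then (mu x * be) *: xj + (mu y * de) *: yj else 0).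
Proof.
rewrite /coef; under eq_bigr do rewrite !scalerDl.
rewrite !big_split /= -sum_restrict ?kept_sub //.
by congr (_ + _ + _); case: eqP => [->|_];
  rewrite ?sum_pick2 // big1 // => a _; rewrite scale0r.
Qed.

Lemma coef_relation l : \sum_(a <- Xs l) coef l a *: a = 0.
Proof.
apply: (skeleton_components Xs_direct (w := fun m => \sum_(a <- Xs m) coef m a *: a)).
  by move=> m; rewrite big_seq rpred_sum // => a aX; rewrite rpredZ // memv_span.
under eq_bigr do rewrite coef_expansion.
rewrite !big_split /= -!big_mkcond !big_pred1_eq -[RHS]mu_rel.
rewrite /cone_set big_fsetU1 ?in_fset1U ?negb_or ?x_neq_y ?x_notin_kept_union //=.
rewrite big_fsetU1 ?y_notin_kept_union //= sum_kept_union.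
rewrite x_def y_def !scalerDr !scalerA.
set S := \sum_(l < k) _.
set a1 := (mu x * al) *: xi; set a2 := (mu x * be) *: xj.
set c1 := (mu y * ga) *: yi; set c2 := (mu y * de) *: yj.
by rewrite -addrA addrACA [RHS]addrA addrC.
Qed.

Lemma coef_vanishes l d : d \in Xs l -> coef l d = 0 ->
  forall a, a \in Xs l -> coef l a = 0.
Proof.
move=> dX d0; have [lam lamXl] := Xs_simplex l.
exact: (relation_vanishes lamXl (coef_relation l) dX d0).
Qed.

(* Away from X_j, the removed vertex has coefficient 0, so the relation on each
   such component is trivial. *)
Lemma coef_vanishes_off_j l : l != j -> forall a, a \in Xs l -> coef l a = 0.
Proof.
move=> l_j; case: (eqVneq l i) => [->|l_i].
  apply: (coef_vanishes r_in); rewrite /coef /pick2 mem_kept /removed eqxx in_fset1 eqxx.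
  by rewrite (negbTE r_neq_xi) (negbTE r_neq_yi) (negbTE i_neq_j) !addr0.
apply: (coef_vanishes (p_in l)); rewrite /coef mem_kept /removed.
by rewrite (negbTE l_i) (negbTE l_j) in_fset1 eqxx !addr0.
Qed.

Lemma coef_at_i : mu xi + mu x * al = 0 /\ mu yi + mu y * ga = 0.
Proof.
have vanish := coef_vanishes_off_j i_neq_j.
move: (vanish xi xi_in) (vanish yi yi_in).
rewrite /coef /pick2 xi_kept yi_kept (negbTE i_neq_j) !eqxx (negbTE xi_neq_yi) eq_sym.
by rewrite (negbTE xi_neq_yi) !addr0 !add0r => -> ->.
Qed.

Lemma coef_at_xj : coef j xj = mu x * be + (if xj == yj then mu y * de else 0).
Proof.
by rewrite /coef /pick2 (negbTE xj_not_kept) eq_sym (negbTE i_neq_j) !eqxx !add0r.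
Qed.

Lemma coef_at_q : coef j q = if q == yj then mu y * de else 0.
Proof.
rewrite /coef /pick2 mem_kept /removed eq_sym (negbTE i_neq_j) eqxx in_fset2 eqxx orbT.
by rewrite (negbTE q_neq_xj) !add0r.
Qed.

Variable a0 : V.
Hypothesis mu_neg : forall b, b \in cone_set -> mu b < 0 -> b = a0.

Lemma two_negatives b c : b \in cone_set -> c \in cone_set -> b != c ->
  mu b < 0 -> mu c < 0 -> False.
Proof.
move=> bA cA bc /(mu_neg bA) b_a0 /(mu_neg cA) c_a0.
by move: bc; rewrite b_a0 c_a0 eqxx.
Qed.

(* Case x_j = y_j: the relation on X_j vanishes at q, so
   mu x * be + mu y * de = 0; a sign change would create two negative
   coefficients among x, y, xi, yi. *)
Lemma mu_xy_zero_shared : xj = yj -> mu x = 0 /\ mu y = 0.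
Proof.
move=> xj_yj; have [xi_eq yi_eq] := coef_at_i.
move: al_gt0 be_gt0 ga_gt0 de_gt0 => al0 be0 ga0 de0. (* nra only sees local hypotheses *)
have q0 : coef j q = 0 by rewrite coef_at_q -xj_yj (negbTE q_neq_xj).
move: (coef_vanishes q_in q0 xj_in); rewrite coef_at_xj xj_yj eqxx => xj_eq.
have xi_cone := kept_cone xi_kept; have yi_cone := kept_cone yi_kept.
case: (ltgtP (mu x) 0) => mux.
- have muy : 0 < mu y by nra.
  by case: (two_negatives x_cone yi_cone x_neq_yi mux); nra.
- have muy : mu y < 0 by nra.
  by case: (two_negatives y_cone xi_cone y_neq_xi muy); nra.
- by split => //; nra.
Qed.

(* Case x_j <> y_j: the coefficients mu x * be and mu y * de of x_j and q = y_j
   have the same sign. *)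
Lemma mu_xy_zero_distinct : xj != yj -> mu x = 0 /\ mu y = 0.
Proof.
move=> xj_yj; have [xi_eq yi_eq] := coef_at_i; have q_eq := q_yj xj_yj.
move: al_gt0 be_gt0 ga_gt0 de_gt0 => al0 be0 ga0 de0. (* nra only sees local hypotheses *)
have [lam lamXj] := Xs_simplex j.
have := relation_same_sign lamXj (coef_relation j) xj_in q_in.
rewrite coef_at_xj coef_at_q (negbTE xj_yj) q_eq eqxx addr0 => -[same_neg same_pos].
have xi_cone := kept_cone xi_kept; have yi_cone := kept_cone yi_kept.
case: (ltgtP (mu x) 0) => mux.
- have muy_de : mu y * de < 0 by apply: same_neg; nra.
  have muy : mu y < 0 by nra.
  by case: (two_negatives x_cone y_cone x_neq_y mux muy).
- have muy_de : 0 < mu y * de by apply: same_pos; nra.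
  have muy : 0 < mu y by nra.
  by case: (two_negatives xi_cone yi_cone xi_neq_yi); nra.
- split => //; have xj0 : coef j xj = 0 by rewrite coef_at_xj (negbTE xj_yj) mux; lra.
  by move: (coef_vanishes xj_in xj0 yj_in); rewrite -q_eq coef_at_q q_eq eqxx; nra.
Qed.

Lemma relation_trivial : forall b, b \in cone_set -> mu b = 0.
Proof.
have [mux muy] : mu x = 0 /\ mu y = 0.
  by case: (eqVneq xj yj) => [/mu_xy_zero_shared|/mu_xy_zero_distinct].
have coefE l a : coef l a = if a \in kept l then mu a else 0.
  by rewrite /coef /pick2 mux muy !mul0r !(if_same, addr0).
move=> b; rewrite !in_fset1U => /orP[/eqP->//|/orP[/eqP->//|]].
rewrite mem_kept_union => /existsP[l bl]; have [d dX dl] := removed_vertex l.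
have d0 : coef l d = 0 by rewrite coefE (negbTE dl).
by move: (coef_vanishes dX d0 (fsubsetP (kept_sub l) b bl)); rewrite coefE bl.
Qed.

End Relation.

Lemma conical_subsets (A : {fset V}) : A `<=` cone_set -> conical_position A.
Proof.
move=> sA; split.
  case=> kap [kap_ge0 [kap1 kap0]].
  pose mu b := if b \in A then kap b else 0.
  have mu_rel : \sum_(b <- cone_set) mu b *: b = 0 by rewrite -sum_restrict.
  have mu_neg b : b \in cone_set -> mu b < 0 -> b = x.
    by rewrite /mu; case: ifP => bA _; rewrite ?ltxx // ltNge kap_ge0.
  move: kap1; rewrite big_seq big1 => [/eqP|b bA]; first by rewrite eq_sym oner_eq0.
  by move: (relation_trivial mu_rel mu_neg (fsubsetP sA b bA)); rewrite /mu bA.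
move=> a aA [l [l_ge0 la]].
pose mu b := if b \in A then (if b == a then -1 else l b) else 0.
have mu_rel : \sum_(b <- cone_set) mu b *: b = 0.
  rewrite -(@sum_restrict _ _ cone_set A (fun b => if b == a then -1 else l b)) //.
  rewrite (big_fsetD1 a) //= eqxx scaleN1r (eq_big_seq (fun b => l b *: b)) ?la ?addNr //.
  by move=> b; rewrite in_fsetD1 => /andP[/negbTE ->].
have mu_neg b : b \in cone_set -> mu b < 0 -> b = a.
  rewrite /mu; case: ifP => bA _; last by rewrite ltxx.
  by case: eqP => // /eqP ba; rewrite ltNge l_ge0 // in_fsetD1 ba.
move: (relation_trivial mu_rel mu_neg (fsubsetP sA a aA)).
by rewrite /mu aA eqxx => /eqP; rewrite oppr_eq0 oner_eq0.
Qed.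

(* |cone_set| = sum_l |kept l| + 2 = sum_l |X_l| - k + 1 >= n + 1. *)
Lemma card_cone_set : (n.+1 <= #|` cone_set|)%N.
Proof.
have card_Xs l : #|` Xs l| = (#|` kept l| + 1 + (l == j))%N.
  have := fsubset_leq_card (removed_sub l); rewrite card_removed => le_card.
  by rewrite /kept cardfsDS ?removed_sub // card_removed -addnA subnK.
have card_sum : (\sum_(l < k) #|` Xs l| = \sum_(l < k) #|` kept l| + k + 1)%N.
  rewrite (eq_bigr _ (fun l _ => card_Xs l)) !big_split /= sum1_card card_ord.
  by congr (_ + _)%N; rewrite (bigD1 j) //= eqxx big1 // => l /negbTE ->.
have card_A : #|` cone_set| = (\sum_(l < k) #|` kept l|).+2.
  rewrite /cone_set cardfsU1 in_fset1U negb_or x_neq_y x_notin_kept_union cardfsU1.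
  rewrite y_notin_kept_union card_fset_sum1 sum_kept_union.
  by rewrite (eq_bigr _ (fun l _ => esym (card_fset_sum1 (kept l)))).
have := skeleton_card Xs_full Xs_simplex; rewrite card_A card_sum.
by set s := (\sum_(l < k) _)%N; rewrite addnAC leq_add2r addn1 ltnS.
Qed.

Lemma cone_set_sub : cone_set `<=` X.
Proof.
apply/fsubsetP => b; rewrite !in_fset1U => /orP[/eqP->//|/orP[/eqP->//|]].
by rewrite inE => /andP[].
Qed.

Lemma conical_subset_of_card :
  exists A : {fset V}, [/\ A `<=` X, #|` A| = n.+1 & conical_position A].
Proof.
have [A sA cardA] := fsubset_of_card card_cone_set.
by exists A; split; [exact: fsubset_trans sA cone_set_sub | | exact: conical_subsets].
Qed.

End ConicalSubset.

Theorem proposition5p3 (R : realType) (n : nat) (X : {fset 'rV[R]_n})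
  (k : nat) (Xs : 'I_k -> {fset 'rV[R]_n}) :
  standing_setting X -> skeleton X Xs ->
  forall x y : 'rV[R]_n, x \in X -> y \in X ->
  (forall l : 'I_k, x \notin <<Xs l>>%VS) ->
  (forall l : 'I_k, y \notin <<Xs l>>%VS) ->
  forall (i j : 'I_k) (xi yi xj yj : 'rV[R]_n), i != j ->
  xi \in Xs i -> yi \in Xs i -> xj \in Xs j -> yj \in Xs j ->
  in_pos [fset xi; xj] x -> in_pos [fset yi; yj] y ->
  (2 < #|` Xs i|)%N -> xi = yi.
Proof.
move=> [zero_notin _ _ good] [Xs_sub Xs_disj Xs_simp Xs_full Xs_direct].
move=> x y x_in y_in x_out y_out i j xi yi xj yj i_neq_j xi_in yi_in xj_in yj_in.
move=> x_pos y_pos Xi_gt2; case: (eqVneq xi yi) => // xi_neq_yi; exfalso.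
have Xs_simplex l : exists lam, simplex_weights (Xs l) lam.
  by case: (Xs_simp l); exact: simplex_weightsP.
have [al [be [al_gt0 be_gt0 x_def]]] := pos_pair_positive xi_in xj_in (x_out i) (x_out j) x_pos.
have [ga [de [ga_gt0 de_gt0 y_def]]] := pos_pair_positive yi_in yj_in (y_out i) (y_out j) y_pos.
have [r [r_in r_xi r_yi]] := exists_third xi yi Xi_gt2.
have [q [q_in q_xj q_yj]] : exists q, [/\ q \in Xs j, q != xj & (xj != yj -> q = yj)].
  case: (eqVneq xj yj) => [<-|xj_yj]; last by exists yj; rewrite eq_sym xj_yj.
  have [lam lamXj] := Xs_simplex j.
  have [q q_in q_xj] := exists_other_vertex lamXj xj_in (contra (fsubsetP (Xs_sub j) 0) zero_notin).
  by exists q.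
have [p p_in] : exists p : 'I_k -> 'rV[R]_n, forall l, p l \in Xs l.
  have nonempty l : exists a, a \in Xs l by have [lam /simplex_nonempty] := Xs_simplex l.
  by exists (fun l => xchoose (nonempty l)) => l; exact: xchooseP.
have x_notin l : x \notin Xs l by apply: contra (x_out l) => /memv_span.
have y_notin l : y \notin Xs l by apply: contra (y_out l) => /memv_span.
have [A [A_sub A_card A_conical]] := conical_subset_of_card Xs_sub Xs_disj Xs_full
  Xs_direct Xs_simplex i_neq_j al_gt0 be_gt0 ga_gt0 de_gt0 x_def y_def xi_in yi_in xj_in
  yj_in x_notin y_notin x_in y_in xi_neq_yi r_in r_xi r_yi q_in q_xj q_yj p_in.
exact: good A A_sub A_card A_conical.
Qed.
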